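(* Let $I$ and $J$ be finite sets, $g\in\mathbb{R}^J$, and for each $i\in I$ let $u_i:\mathbb{R}^J\to\mathbb{R}\cup\{-\infty\}$ be upper semicontinuous and concave with $u_i(x_i+rg)>u_i(x_i)$ for all $x_i\in\mathrm{dom}\,u_i$ and $r>0$. Assume: (A) whenever $x\in\mathbb{R}^{I\times J}$ satisfies $u_i^\infty(x_i)\ge0$ for all $i$ and $\sum_{i}x_i=0$, then $x=0$; (B) for every $r>0$ and every $i\in I$ there exists $\delta_i>0$ with $u_i(x_i+rg)\ge u_i(x_i)+\delta_i r$ for all $x_i\in\mathbb{B}(r)$. Let $x^0\in\mathbb{R}^{I\times J}$ be an initial allocation and let $(x^t)_{t\ge0}$ be generated by repeated double auctions: for $t\ge1$, with $D^t_i(y_i):=\sup\{r\in\mathbb{R}\mid u_i(x^{t-1}_i+y_i-rg)\ge u_i(x^{t-1}_i)\}$, let $\bar x^t\in\mathbb{R}^{I\times J}$ solve ''maximize $\sum_i D^t_i(y_i)$ subject to $\sum_i y_i=0$'', let $p^t\in\mathbb{R}^J$ satisfy $p^t\in\partial D^t_i(\bar x^t_i)$ for all $i\in I$, and set $x^t_i:=x^{t-1}_i+\bar x^t_i-(p^t\cdot\bar x^t_i)g$. Then: the sequence $(x^t)$ is bounded; $CS(x^t)$ is nonincreasing in $t$ and converges to zero; there is $r>0$ such that, with $\delta_i$ the constants given by (B) for this $r$, \[ CS(x^t)\le\frac1t\sum_{i\in I}\frac{u_i(x^t_i)-u_i(x^0_i)}{\delta_i}\quad\text{for all }t\ge1;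 \] and every cluster point $\bar x$ of $(x^t)_{t=0}^\infty$ is a double auction equilibrium and individually rational. If moreover each $u_i$ satisfies: whenever $u_i(y_i)>u_i(y_i')$ for some $y_i'\in\mathrm{dom}\,u_i$, then $y_i-\varepsilon g\in\mathrm{dom}\,u_i$ for all small enough $\varepsilon>0$, then every such cluster point $\bar x$ is Pareto efficient.
   Context: $\mathrm{dom}\,u_i=\{x\mid u_i(x)>-\infty\}$; $u_i^\infty(x_i):=\inf_{\alpha>0}\frac{u_i(\bar x_i+\alpha x_i)-u_i(\bar x_i)}{\alpha}$ for any $\bar x_i\in\mathrm{dom}\,u_i$ is the recession function; $\mathbb{B}(r)$ is the closed ball of radius $r$ at the origin in $\mathbb{R}^J$; $\partial D(\bar y)$ is the superdifferential $\{p\mid D(y)\le D(\bar y)+p\cdot(y-\bar y)\ \forall y\}$. For an allocation $x$, $CS(x)$ is the optimal value of ''maximize $\sum_i D_i(y_i)$ over $y\in\mathbb{R}^{I\times J}$ subject to $\sum_i y_i=0$'' where $D_i(y_i)=\sup\{r\mid u_i(x_i+y_i-rg)\ge u_i(x_i)\}$; $x$ is a double auction equilibrium if $CS(x)=0$. An allocation $\bar x$ is individually rational if $u_i(\bar x_i)\ge u_i(x^0_i)$ for all $i$. An allocation is feasible if its total equals $\sum_i x^0_i$, and a feasible $\bar x$ is Pareto efficient if no feasible $x'$ has $u_i(x'_i)\ge u_i(\bar x_i)$ for all $i$ with strict inequality for some $i$. *)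

(* R : realType, finite index sets I J : finType,
   vectors of R^J are functions J -> R, allocations are functions I -> J -> R,
   utilities take values in \bar R (with +oo excluded by hypothesis). *)
From HB Require Import structures.
From mathcomp Require Import all_boot all_order all_algebra.
From mathcomp Require Import all_classical all_reals all_analysis.
Set Implicit Arguments. Unset Strict Implicit. Unset Printing Implicit Defensive.
Import Order.TTheory GRing.Theory Num.Theory.
Local Open Scope classical_set_scope.
Local Open Scope ring_scope.

Section Vec.
Context {R : realType} {J : finType}.

Definition dotp (p y : J -> R) : R := \sum_(j : J) p j * y j.

Definition sqnorm (x : J -> R) : R := \sum_(j : J) x j ^+ 2.

Definition inball (r : R) (x : J -> R) : Prop := sqnorm x <= r ^+ 2.

Definition dom (u : (J -> R) -> \bar R) : set (J -> R) :=
  [set x | (-oo < u x)%E].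

Definition usc (u : (J -> R) -> \bar R) : Prop :=
  forall (x : J -> R) (a : R), (u x < a%:E)%E ->
    exists2 e : R, 0 < e &
      forall y : J -> R, sqnorm (fun j => y j - x j) < e ^+ 2 -> (u y < a%:E)%E.

(* concavity (on the effective domain; u is -oo outside it) *)
Definition concave (u : (J -> R) -> \bar R) : Prop :=
  forall (x y : J -> R) (l : R), dom u x -> dom u y -> 0 <= l <= 1 ->
    ((l * fine (u x) + (1 - l) * fine (u y))%:E
       <= u (fun j => (l * x j + (1 - l) * y j)%R))%E.

(* recession function u^oo(x) computed at the base point xb in dom u:
   inf_{a > 0} (u(xb + a x) - u(xb)) / a *)
Definition recession (u : (J -> R) -> \bar R) (xb x : J -> R) : \bar R :=
  ereal_inf [set ((u (fun j => (xb j + a * x j)%R) - u xb) * (a^-1)%:E)%E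
            | a in [set a : R | 0 < a]].

Definition Dfun (u : (J -> R) -> \bar R) (g x y : J -> R) : \bar R :=
  ereal_sup [set r%:E | r in [set r : R |
     (u x <= u (fun j => (x j + y j - r * g j)%R))%E]].

Definition superdiff (D : (J -> R) -> \bar R) (yb p : J -> R) : Prop :=
  forall y : J -> R, (D y <= D yb + (dotp p (fun j => (y j - yb j)%R))%:E)%E.

End Vec.

Section Alloc.
Context {R : realType} {I J : finType}.

Definition CS (u : I -> (J -> R) -> \bar R) (g : J -> R) (x : I -> J -> R)
  : \bar R :=
  ereal_sup [set (\sum_(i : I) Dfun (u i) g (x i) (y i))%E
            | y in [set y : I -> J -> R | forall j, \sum_(i : I) y i j = 0]].

Definition DA_equilibrium u g (x : I -> J -> R) : Prop := CS u g x = 0%E.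

Definition individually_rational (u : I -> (J -> R) -> \bar R)
  (x0 x : I -> J -> R) : Prop := forall i, (u i (x0 i) <= u i (x i))%E.

Definition feasible (x0 x : I -> J -> R) : Prop :=
  forall j, \sum_(i : I) x i j = \sum_(i : I) x0 i j.

Definition pareto_efficient (u : I -> (J -> R) -> \bar R)
  (x0 x : I -> J -> R) : Prop :=
  feasible x0 x /\
  ~ (exists x' : I -> J -> R, feasible x0 x' /\
       (forall i, (u i (x i) <= u i (x' i))%E) /\
       (exists i, (u i (x i) < u i (x' i))%E)).

Definition cluster_point (x : nat -> I -> J -> R) (xb : I -> J -> R) : Prop :=
  forall e : R, 0 < e -> forall N : nat, exists2 t : nat, (N <= t)%N &
    forall i j, `|x t i j - xb i j| < e.

End Alloc.

(* The
   bundle x_i + xbar_i - D_i(xbar_i) g is already as good as x_i (the supremum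
   defining D_i is attained by upper semicontinuity), and the superdifferential
   inequality at 0, where D_i(0) = 0, makes the extra amount D_i(xbar_i) - p . xbar_i
   of g nonnegative.  So utilities increase while the aggregate endowment is
   preserved, and since CS is antitone in utility levels among allocations with
   the same total, CS(x^t) is nonincreasing.
   Assumption (A) bounds the individually rational allocations whose total is
   that of x^0 minus at most CS(x^0) units of g: an unbounded family would have a
   nonzero recession direction with zero sum.  This yields one radius r for (B),
   and by concavity (B) turns every extra amount s of g into a utility increase of
   at least delta_i s.  Summing over agents and auctions gives
   t CS(x^t) <= sum_i (u_i(x^t_i) - u_i(x^0_i)) / delta_i, which is bounded by the
   utilities at a cluster point.  At a cluster point utilities dominate those of
   the sequence, so its CS is at most every CS(x^t), hence 0; and a Pareto
   improvement, with a little g removed from the strictly better bundle, would be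
   a trade with positive total D. *)

From HB Require Import structures.
From mathcomp Require Import all_boot all_order all_algebra.
From mathcomp Require Import all_classical all_reals all_analysis.
From mathcomp Require Import ring lra.
Import Order.TTheory GRing.Theory Num.Theory.
Local Open Scope classical_set_scope.
Local Open Scope ring_scope.

Section Sqnorm.
Context {R : realType} {J : finType}.
Implicit Types (v : J -> R) (a : R).

Lemma sqnorm_ge0 v : 0 <= sqnorm v.
Proof. by apply: sumr_ge0 => j _; rewrite sqr_ge0. Qed.

Lemma sqnormZ a v : sqnorm (fun j => a * v j) = a ^+ 2 * sqnorm v.
Proof. by rewrite /sqnorm mulr_sumr; apply: eq_bigr => j _; rewrite exprMn. Qed.

Lemma sqnorm_le_card {v : J -> R} {d : R} :
  (forall j, `|v j| <= d) -> sqnorm v <= #|J|%:R * d ^+ 2.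
Proof.
move=> vd; rewrite /sqnorm mulr_natl -sumr_const; apply: ler_sum => j _.
by rewrite -real_normK ?num_real // lerXn2r ?nnegrE ?(le_trans _ (vd j)).
Qed.

Lemma sqnorm_lt_sqr {v : J -> R} {e : R} : 0 < e ->
  (forall j, `|v j| <= e / (#|J|%:R + 1)) -> sqnorm v < e ^+ 2.
Proof.
move=> e0 /sqnorm_le_card /le_lt_trans; apply.
have n0 : 0 <= #|J|%:R :> R by [].
rewrite expr_div_n mulrA ltr_pdivrMr ?exprn_gt0 ?ltr_wpDl //; nra.
Qed.

Lemma sqnormZ_lt {a e : R} {v : J -> R} : 0 < a -> a <= e / (sqnorm v + 1) ->
  sqnorm (fun j => a * v j) < e ^+ 2.
Proof.
have V0 := sqnorm_ge0 v.
move=> a0; rewrite ler_pdivlMr ?ltr_wpDl // sqnormZ => ae.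
apply: lt_le_trans (_ : (a * (sqnorm v + 1)) ^+ 2 <= _); last first.
  by rewrite lerXn2r ?nnegrE //; nra.
rewrite exprMn ltr_pM2l ?exprn_gt0 //; nra.
Qed.

End Sqnorm.

Lemma small_weight_gt {R : realType} (W : R) {A B c : R} : B < A -> 0 < c ->
  exists l, [/\ 0 < l, l <= 1, l <= c & B < l * W + (1 - l) * A].
Proof.
move=> BA c0; have AW0 := normr_ge0 (A - W).
pose l := Num.min 1 (Num.min c ((A - B) / (`|A - W| + 1))).
have l0 : 0 < l by rewrite !lt_min ltr01 c0 divr_gt0 //; lra.
have [l1 lc lAB] : [/\ l <= 1, l <= c & l <= (A - B) / (`|A - W| + 1)].
  by rewrite !ge_min !lexx !orbT.
exists l; split => //.
rewrite ler_pdivlMr ?ltr_wpDl // in lAB.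
have : l * (A - W) <= l * `|A - W| by rewrite ler_pM2l // ler_norm.
nra.
Qed.

(** * A single concave utility *)

Lemma dom_le {R : realType} {J : finType} {u : (J -> R) -> \bar R} {y z : J -> R} :
  dom u y -> (u y <= u z)%E -> dom u z.
Proof. exact: lt_le_trans. Qed.

Definition Dlevel {R : realType} {J : finType} (u : (J -> R) -> \bar R) (g x y : J -> R) :
  set R := [set r | (u x <= u (fun j => (x j + y j - r * g j)%R))%E].

Section Utility.
Context {R : realType} {J : finType} {u : (J -> R) -> \bar R} {g : J -> R}.
Hypotheses (u_noinf : forall y, u y != +oo%E) (u_usc : usc u) (u_conc : concave u)
  (u_incr_g : forall {y : J -> R} {r : R}, dom u y -> 0 < r ->
     (u y < u (fun j => (y j + r * g j)%R))%E).
Implicit Types (v w y z : J -> R) (a r s : R).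

Lemma u_fin {y} : dom u y -> u y = (fine (u y))%:E.
Proof. by move=> yd; rewrite fineK // fin_numE u_noinf andbT gt_eqF. Qed.

Lemma u_nondecr_g {y : J -> R} {r : R} : dom u y -> 0 <= r ->
  (u y <= u (fun j => (y j + r * g j)%R))%E.
Proof.
move=> yd; rewrite le_eqVlt => /predU1P [<-|r0]; last exact/ltW/u_incr_g.
by under eq_fun do rewrite mul0r addr0.
Qed.

Lemma bounded_ray_nondecr {v d : J -> R} {L : R} :
  (forall a, 0 < a -> (L%:E <= u (fun j => (v j + a * d j)%R))%E) ->
  forall w, dom u w -> forall a, 0 < a -> (u w <= u (fun j => (w j + a * d j)%R))%E.
Proof.
move=> rayL w wd a a0; rewrite leNgt; apply/negP.
set z := fun j => w j + a * d j; rewrite (u_fin wd); set b := fine (u w) => zb.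
have [a' za' a'b] : exists2 a', (u z < a'%:E)%E & a' < b.
  move: zb; case: (u z) => [c||] //= cb; last by exists (b - 1); rewrite ?ltNyr //; lra.
  by exists ((c + b) / 2); move: cb; rewrite !lte_fin => cb; lra.
have [e e0 near_z] := u_usc _ _ za'.
have [l [l0 l1 le la']] := small_weight_gt L a'b
  (divr_gt0 e0 (ltr_wpDl (sqnorm_ge0 (fun j => v j - w j)) ltr01)).
pose x1 j := v j + (a / l) * d j.
have x1L : (L%:E <= u x1)%E by apply: rayL; exact: divr_gt0.
have x1d : dom u x1 by apply: lt_le_trans x1L; exact: ltNyr.
have := u_conc x1 w l x1d wd (introT andP (conj (ltW l0) l1)).
have -> : (fun j => l * x1 j + (1 - l) * w j) = (fun j => z j + l * (v j - w j)).
  by apply/funext => j; rewrite /x1 /z; field; rewrite gt_eqF.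
move=> /le_lt_trans/(_ (near_z _ _)); rewrite lte_fin.
have <- : (fun j => l * (v j - w j)) = (fun j => z j + l * (v j - w j) - z j).
  by apply/funext => j; ring.
move=> /(_ (sqnormZ_lt l0 le)); rewrite -/b.
have : l * L <= l * fine (u x1) by rewrite ler_pM2l // -lee_fin -(u_fin x1d).
lra.
Qed.

Lemma Dfun_ge x y r : Dlevel u g x y r -> (r%:E <= Dfun u g x y)%E.
Proof. by move=> xyr; apply: ereal_sup_ubound; exists r. Qed.

Lemma Dlevel_le x y r r' : dom u x -> Dlevel u g x y r -> r' <= r -> Dlevel u g x y r'.
Proof.
move=> xd xyr r'r; apply: (le_trans xyr).
have -> : (fun j => x j + y j - r' * g j) =
          (fun j => (x j + y j - r * g j) + (r - r') * g j) by apply/funext => j; ring.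
by apply: u_nondecr_g; [exact: dom_le xd xyr | rewrite subr_ge0].
Qed.

Lemma Dlevel_lt x y r : dom u x -> (r%:E < Dfun u g x y)%E -> Dlevel u g x y r.
Proof.
move=> xd /ereal_sup_gt [_ [r' xyr' <-]]; rewrite lte_fin => rr'.
exact: Dlevel_le xd xyr' (ltW rr').
Qed.

Lemma Dfun0 {x} : dom u x -> Dfun u g x (fun=> 0) = 0%E.
Proof.
move=> xd; apply/eqP; rewrite eq_le; apply/andP; split; last first.
  by apply: Dfun_ge; rewrite /Dlevel /=; under eq_fun do rewrite addr0 mul0r subr0.
apply: ge_ereal_sup => _ [r xr <-]; rewrite lee_fin leNgt; apply/negP => r0.
have := u_incr_g (dom_le xd xr) r0.
have -> : (fun j => x j + 0 - r * g j + r * g j) = x by apply/funext => j; ring.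
by rewrite ltNge xr.
Qed.

(* If D(y) were +oo, u would stay above u(x) along the ray x + y - r g, so -g
   would be a recession direction and u(x - g) >= u(x), against monotonicity. *)
Lemma Dfun_neq_pinfty x y : dom u x -> Dfun u g x y != +oo%E.
Proof.
move=> xd; apply/eqP => Dy.
have ray : forall a, 0 < a ->
    ((fine (u x))%:E <= u (fun j => ((x j + y j) + a * - g j)%R))%E.
  move=> a _; rewrite -(u_fin xd).
  under eq_fun do rewrite mulrN.
  by apply: Dlevel_lt => //; rewrite Dy ltry.
have := bounded_ray_nondecr ray x xd 1 ltr01.
set x1 := fun j => x j + 1 * - g j => xx1.
have := u_incr_g (dom_le xd xx1) ltr01.
have -> : (fun j => x1 j + 1 * g j) = x by apply/funext => j; rewrite /x1; ring.
by rewrite ltNge xx1.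
Qed.

Lemma Dfun_attained x y s : dom u x -> Dfun u g x y = s%:E -> Dlevel u g x y s.
Proof.
move=> xd Ds; rewrite /Dlevel /= leNgt; apply/negP.
set pt := fun j => x j + y j - s * g j; rewrite (u_fin xd) => ptx.
have [e e0 near_pt] := u_usc _ _ ptx.
pose del := e / (sqnorm g + 1).
have del0 : 0 < del by apply: divr_gt0 => //; exact: ltr_wpDl (sqnorm_ge0 g) ltr01.
have : Dlevel u g x y (s - del) by apply: Dlevel_lt => //; rewrite Ds lte_fin gtrBl.
rewrite /Dlevel /= (u_fin xd) leNgt => /negP; apply; apply: near_pt.
have -> : (fun j => x j + y j - (s - del) * g j - pt j) = (fun j => del * g j).
  by apply/funext => j; rewrite /pt; ring.
exact: sqnormZ_lt del0 (lexx _).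
Qed.

Lemma Dfun_fin {x y : J -> R} : dom u x -> (-oo < Dfun u g x y)%E ->
  exists2 s, Dfun u g x y = s%:E & Dlevel u g x y s.
Proof.
move=> xd; case Ds: (Dfun u g x y) => [s||] // _; last first.
  by move: (Dfun_neq_pinfty x y xd); rewrite Ds.
by exists s => //; exact: Dfun_attained.
Qed.

Lemma concave_gain_g {y : J -> R} {r s d : R} : dom u y -> 0 < r -> 0 <= s <= r ->
  (u y + (d * r)%:E <= u (fun j => (y j + r * g j)%R))%E ->
  (u y + (d * s)%:E <= u (fun j => (y j + s * g j)%R))%E.
Proof.
move=> yd r0 /andP [s0 sr] gain_r.
have yrd := dom_le yd (u_nondecr_g yd (ltW r0)).
set l := s / r.
have l01 : 0 <= l <= 1 by rewrite divr_ge0 ?(ltW r0) //= ler_pdivrMr // mul1r.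
have := u_conc _ _ _ yrd yd l01.
have -> : (fun j => l * (y j + r * g j) + (1 - l) * y j) = (fun j => y j + s * g j).
  by apply/funext => j; rewrite /l; field; rewrite gt_eqF.
apply: le_trans; move: gain_r; rewrite (u_fin yd) (u_fin yrd) -!EFinD !lee_fin.
have -> : d * s = l * (d * r) by rewrite /l; field; rewrite gt_eqF.
move: l01 => /andP [l0 l1]; nra.
Qed.

Lemma asymptotic_direction {x0 d : J -> R} {z : nat -> J -> R} {N : nat -> R} :
  dom u x0 -> (forall n, (u x0 <= u (z n))%E) -> (forall n, n%:R < N n) ->
  (forall e, 0 < e -> forall M, exists2 n, (M <= n)%N &
     forall j, `|(z n j - x0 j) / N n - d j| < e) ->
  forall a, 0 < a -> (u x0 <= u (fun j => (x0 j + a * d j)%R))%E.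
Proof.
move=> x0d z_up N_gt dir a a0; rewrite leNgt; apply/negP.
rewrite (u_fin x0d); set b := fine (u x0) => zb.
have [e e0 near_z] := u_usc _ _ zb.
have e'0 : 0 < e / (#|J|%:R + 1) / a by rewrite !divr_gt0 // ltr_wpDl.
have [n an close] := dir _ e'0 (Num.bound a).
have N0 : 0 < N n by apply: le_lt_trans (N_gt n).
pose l := a / N n.
have l01 : 0 <= l <= 1.
  rewrite /l divr_ge0 ?(ltW a0) ?(ltW N0) //= ler_pdivrMr // mul1r.
  apply/ltW/(lt_trans _ (N_gt n)); apply: lt_le_trans (archi_boundP (ltW a0)) _.
  by rewrite ler_nat.
have znd := dom_le x0d (z_up n).
have := u_conc _ _ _ znd x0d l01.
have -> : (fun j => l * z n j + (1 - l) * x0 j) =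
          (fun j => x0 j + a * ((z n j - x0 j) / N n)).
  by apply/funext => j; rewrite /l; field; rewrite gt_eqF.
have near : sqnorm (fun j => x0 j + a * ((z n j - x0 j) / N n) - (x0 j + a * d j)) < e ^+ 2.
  apply: (sqnorm_lt_sqr e0) => j.
  rewrite (_ : _ - _ = a * ((z n j - x0 j) / N n - d j)); last by ring.
  by rewrite normrM gtr0_norm //; have := close j; rewrite ltr_pdivlMr // mulrC => /ltW.
move=> /le_lt_trans/(_ (near_z _ near)); rewrite lte_fin -/b.
have : l * b <= l * fine (u (z n)).
  by move: l01 => /andP [l0 _]; rewrite ler_wpM2l // -lee_fin -(u_fin znd) /b -(u_fin x0d).
nra.
Qed.

Lemma recession_ge0 {x0 d : J -> R} : dom u x0 ->
  (forall a, 0 < a -> (u x0 <= u (fun j => (x0 j + a * d j)%R))%E) ->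
  forall xb, dom u xb -> (0 <= recession u xb d)%E.
Proof.
move=> x0d; rewrite (u_fin x0d) => ray xb xbd; apply: le_ereal_inf_tmp => _ [a a0 <-].
apply: mule_ge0; last by rewrite lee_fin invr_ge0 ltW.
by rewrite sube_ge0 ?(bounded_ray_nondecr ray) // (u_fin xbd).
Qed.

Lemma usc_le_cluster {y : nat -> J -> R} {xb : J -> R} :
  nondecreasing_seq (u \o y) ->
  (forall e, 0 < e -> forall N, exists2 t, (N <= t)%N & forall j, `|y t j - xb j| < e) ->
  forall t, (u (y t) <= u xb)%E.
Proof.
move=> uy_nd y_xb t; rewrite leNgt; apply/negP => xbt.
have ytd : dom u (y t) := le_lt_trans (leNye _) xbt.
rewrite (u_fin ytd) in xbt; have [e e0 near_xb] := u_usc _ _ xbt.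
have [t' tt' close] := y_xb _ (divr_gt0 e0 (ltr_wpDl (ler0n _ #|J|) ltr01)) t.
have := near_xb _ (sqnorm_lt_sqr e0 (fun j => ltW (close j))).
by rewrite -(u_fin ytd) ltNge (uy_nd _ _ tt').
Qed.

Lemma lt_u_sub_g {xb z : J -> R} : dom u xb -> (u xb < u z)%E ->
  (exists2 e0 : R, 0 < e0 &
     forall e : R, 0 < e -> e < e0 -> dom u (fun j => z j - e * g j)) ->
  exists2 rho : R, 0 < rho & (u xb <= u (fun j => (z j - rho * g j)%R))%E.
Proof.
move=> xbd xbz [e0 e00 z_gd].
have zd := dom_le xbd (ltW xbz).
pose eps := e0 / 2.
have eps0 : 0 < eps by rewrite divr_gt0.
have wd : dom u (fun j => z j - eps * g j) by apply: z_gd => //; rewrite /eps; lra.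
set w := fun j => z j - eps * g j in wd.
move: xbz; rewrite (u_fin xbd) (u_fin zd) lte_fin => xbz.
have [l [l0 l1 _ l_gt]] := small_weight_gt (fine (u w)) xbz ltr01.
exists (l * eps); first exact: mulr_gt0.
have := u_conc _ _ _ wd zd (introT andP (conj (ltW l0) l1)).
have -> : (fun j => l * w j + (1 - l) * z j) = (fun j => z j - l * eps * g j).
  by apply/funext => j; rewrite /w; ring.
by apply: le_trans; rewrite (u_fin xbd) lee_fin ltW.
Qed.

End Utility.

(** * Cluster points *)

Lemma increasing_seq_ge (f : nat -> nat) : increasing_seq f -> forall n, (n <= f n)%N.
Proof.
move=> f_incr; elim=> [//|n IH]; apply: leq_ltn_trans IH _.
by rewrite ltnNge -leEnat f_incr ltnn.
Qed.

Section Cluster.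
Context {R : realType}.

Lemma finite_cluster {T : finType} {y : nat -> T -> R} {M : R} :
  (forall n k, `|y n k| <= M) ->
  exists l : T -> R, forall e, 0 < e -> forall N, exists2 n, (N <= n)%N &
    forall k, `|y n k - l k| < e.
Proof.
move=> yM.
have [f [f_ge [l yl]]] : exists f : nat -> nat, (forall n, n <= f n)%N /\
    exists l : T -> R, forall e, 0 < e -> exists N0, forall n, (N0 <= n)%N ->
      forall k, k \in enum T -> `|y (f n) k - l k| < e.
  elim: (enum T) => [|k0 s [f [f_ge [l yl]]]].
    by exists id; split => //; exists (fun=> 0) => e _; exists 0%N.
  have y_bnd : bounded_fun (fun n => y (f n) k0).
    exists M; split; first exact: num_real.
    by move=> c Mc n _; exact: le_trans (yM _ _) (ltW Mc).
  have [f2 /increasing_seq_ge f2_ge f2_cvg] := bolzano_weierstrass y_bnd.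
  have /cvgrPdist_lt yl0 := f2_cvg.
  set l0 := lim _ in yl0.
  exists (f \o f2); split; first by move=> n; exact: leq_trans (f2_ge n) (f_ge _).
  exists (fun k => if k == k0 then l0 else l k) => e e0.
  have [N1 _ close0] := yl0 e e0; have [N0 close] := yl e e0.
  exists (maxn N0 N1) => n; rewrite geq_max => /andP [N0n N1n] k.
  rewrite in_cons; case: eqP => [-> _|_ /= ks]; first by rewrite distrC; exact: close0.
  by apply: close ks; exact: leq_trans (f2_ge n).
exists l => e e0 N; have [N0 close] := yl e e0.
exists (f (maxn N N0)); first exact: leq_trans (leq_maxl _ _) (f_ge _).
by move=> k; apply: close; rewrite ?leq_maxr ?mem_enum.
Qed.

Lemma sum_dist_le {T : finType} {a b : T -> R} {e : R} :
  (forall k, `|a k - b k| <= e) -> `|\sum_k a k - \sum_k b k| <= #|T|%:R * e.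
Proof.
move=> ab; rewrite -sumrB mulr_natl -sumr_const.
by apply: le_trans (ler_norm_sum _ _ _) _; exact: ler_sum.
Qed.

Context {I J : finType}.
Implicit Types (l : I -> J -> R) (z : nat -> I -> J -> R).

Lemma bounded_cluster_point {z} {M : R} :
  (forall n i j, `|z n i j| <= M) -> exists l, cluster_point z l.
Proof.
move=> zM; have [l zl] := finite_cluster (fun n (k : I * J) => zM n k.1 k.2).
exists (fun i j => l (i, j)) => e e0 N; have [n Nn close] := zl e e0 N.
by exists n => // i j; exact: close (i, j).
Qed.

Lemma cluster_point_sum {z l} {s : J -> R} : cluster_point z l ->
  (forall e, 0 < e -> exists N, forall n, (N <= n)%N ->
     forall j, `|\sum_i z n i j - s j| <= e) ->
  forall j, \sum_i l i j = s j.
Proof.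
move=> zl zs j; apply/eqP; rewrite -subr_eq0 -normr_le0.
apply/ler_addgt0Pr => e e0; rewrite add0r.
have nI : 0 <= #|I|%:R :> R by [].
have e2 : 0 < e / 2 by rewrite divr_gt0.
have [N close_s] := zs _ e2.
have [n Nn close_l] := zl (e / 2 / (#|I|%:R + 1)) (divr_gt0 e2 (ltr_wpDl nI ltr01)) N.
have := sum_dist_le (fun k => ltW (close_l k j)).
rewrite -[\sum_i l i j - s j](subrKA (\sum_i z n i j)) distrC => close_ln.
apply: le_trans (ler_normD _ _) _.
have : #|I|%:R * (e / 2 / (#|I|%:R + 1)) <= e / 2.
  by rewrite mulrA ler_pdivrMr ?ltr_wpDl //; nra.
have := close_s n Nn j; lra.
Qed.
End Cluster.

(** * Consumer surplus *)

Section ConsumerSurplus.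
Context {R : realType} {I J : finType} {u : I -> (J -> R) -> \bar R} {g : J -> R}.

(* Trading y at x is the same as trading y + x - x' at x', so if x' is worse
   than x for everybody, every trade at x is worth at least as much at x'. *)
Lemma CS_le (x x' : I -> J -> R) :
  (forall j, \sum_i x i j = \sum_i x' i j) -> (forall i, (u i (x' i) <= u i (x i))%E) ->
  (CS u g x <= CS u g x')%E.
Proof.
move=> sum_eq x'x; apply: ge_ereal_sup => _ [y y0 <-].
pose y' i j := y i j + x i j - x' i j.
apply: (@le_trans _ _ (\sum_i Dfun (u i) g (x' i) (y' i))); last first.
  apply: ereal_sup_ubound; exists y' => //= j.
  by rewrite /y' sumrB big_split /= y0 sum_eq add0r subrr.
apply: lee_sum => i _; apply: ereal_sup_le => _ [r xr <-]; exists r => //=.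
have -> : (fun j => x' i j + y' i j - r * g j) = (fun j => x i j + y i j - r * g j).
  by apply/funext => j; rewrite /y'; ring.
exact: le_trans (x'x i) xr.
Qed.

Lemma CS_ge0 {x : I -> J -> R} :
  (forall i (y : J -> R) (r : R), dom (u i) y -> 0 < r ->
     (u i y < u i (fun j => (y j + r * g j)%R))%E) ->
  (forall i, dom (u i) (x i)) -> (0 <= CS u g x)%E.
Proof.
move=> u_incr_g xd; apply: ereal_sup_ubound; exists (fun _ _ => 0) => /=.
  by move=> j; rewrite big1.
by rewrite big1 // => i _; rewrite (Dfun0 (u_incr_g i) (xd i)).
Qed.

End ConsumerSurplus.

(** * Bounded individually rational allocations *)

Section Norm1.
Context {R : realType} {I J : finType}.
Implicit Types (a : I -> J -> R).

Definition norm1 a : R := \sum_i \sum_j `|a i j|.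

Lemma normr_le_norm1 a i j : `|a i j| <= norm1 a.
Proof.
rewrite /norm1 (bigD1 i) //= (bigD1 j) //= -addrA lerDl.
by rewrite addr_ge0 ?sumr_ge0 // => *; rewrite sumr_ge0.
Qed.

Lemma norm1_le_card {a} {e : R} : (forall i j, `|a i j| <= e) ->
  norm1 a <= #|I|%:R * #|J|%:R * e.
Proof.
move=> ae; rewrite -mulrA !mulr_natl -!sumr_const.
by apply: ler_sum => i _; apply: ler_sum => j _.
Qed.

Lemma norm1Zr a (c : R) : 0 <= c -> norm1 (fun i j => a i j * c) = norm1 a * c.
Proof.
move=> c0; rewrite /norm1 mulr_suml; apply: eq_bigr => i _.
by rewrite mulr_suml; apply: eq_bigr => j _; rewrite normrM (ger0_norm c0).
Qed.

Lemma unbounded_direction {z : nat -> I -> J -> R} :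
  (forall n, n%:R < norm1 (z n)) ->
  exists2 l, l <> (fun _ _ => 0) & cluster_point (fun n i j => z n i j / norm1 (z n)) l.
Proof.
move=> z_gt; have z0 n : 0 < norm1 (z n) by apply: le_lt_trans (z_gt n).
pose d n i j := z n i j / norm1 (z n).
have d1 n : norm1 (d n) = 1 by rewrite norm1Zr ?invr_ge0 ?ltW // divff ?gt_eqF.
have [l dl] : exists l, cluster_point d l.
  apply: (@bounded_cluster_point _ _ _ _ 1) => n i j.
  by rewrite -(d1 n); exact: normr_le_norm1.
exists l => // l0; move: dl; rewrite l0 => dl.
pose c : R := #|I|%:R * #|J|%:R.
have c0 : 0 <= c by rewrite mulr_ge0.
have [n _ small] := dl (1 / (c + 1)) (divr_gt0 ltr01 (ltr_wpDl c0 ltr01)) 0%N.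
have d_small i j : `|d n i j| <= 1 / (c + 1) by move: (small i j); rewrite subr0 => /ltW.
have := norm1_le_card d_small.
rewrite d1 -/c mulrA ler_pdivlMr ?ltr_wpDl //; lra.
Qed.

End Norm1.

Section BoundedIR.
Context {R : realType} {I J : finType} {u : I -> (J -> R) -> \bar R} (g : J -> R)
  {x0 : I -> J -> R}.
Hypotheses (u_noinf : forall i y, u i y != +oo%E) (u_usc : forall i, usc (u i))
  (u_conc : forall i, concave (u i))
  (hypA : forall y : I -> J -> R,
      (forall i (xb : J -> R), dom (u i) xb -> (0 <= recession (u i) xb (y i))%E) ->
      (forall j, \sum_i y i j = 0) -> y = (fun _ _ => 0))
  (x0_dom : forall i, dom (u i) (x0 i)).

(* An unbounded family would have a cluster point of normalised deviations from
   x0 that is a nonzero recession direction of every u_i with zero sum. *)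
Lemma IR_deviation_bounded (C : R) : exists M : R, forall z : I -> J -> R,
  individually_rational u x0 z ->
  (exists2 c : R, 0 <= c <= C & forall j, \sum_i z i j = \sum_i x0 i j - c * g j) ->
  norm1 (fun i j => z i j - x0 i j) <= M.
Proof.
apply: contrapT => unb.
have /choice [z zP] : forall n : nat, exists z : I -> J -> R,
    [/\ individually_rational u x0 z,
        exists2 c : R, 0 <= c <= C & forall j, \sum_i z i j = \sum_i x0 i j - c * g j
      & n%:R < norm1 (fun i j => z i j - x0 i j)].
  move=> n; apply: contrapT => no_z; apply: unb; exists n%:R => z zIR zc.
  by rewrite leNgt; apply/negP => nz; apply: no_z; exists z.
have /all_and3 [zIR zc z_gt] := zP.
have [d d0 dcl] := unbounded_direction z_gt.
apply: d0; apply: hypA => [i xb xbd|].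
  apply: (recession_ge0 (u_noinf i) (u_usc i) (u_conc i) (x0_dom i) _ xb xbd).
  apply: (asymptotic_direction (u_noinf i) (u_usc i) (u_conc i) (x0_dom i) (zIR^~ i)
    z_gt).
  by move=> e e0 M; have [n Mn close] := dcl e e0 M; exists n => // j; exact: close i j.
have C0 : 0 <= C by have [c /andP [c0 cC] _] := zc 0%N; exact: le_trans cC.
pose G := C * \sum_j `|g j|.
apply: (cluster_point_sum dcl) => e e0.
exists (Num.bound (G / e)) => n bn j.
have [c /andP [c0 cC] zcj] := zc n.
have N0 := le_lt_trans (ler0n _ n) (z_gt n).
rewrite subr0 -mulr_suml sumrB zcj addrAC subrr add0r normrM normrN.
rewrite ger0_norm ?invr_ge0 ?(ltW N0) // ler_pdivrMr //.
have cgG : `|c * g j| <= G.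
  by rewrite normrM ger0_norm // ler_pM // (bigD1 j) //= lerDl sumr_ge0.
have G0 : 0 <= G by rewrite mulr_ge0 ?sumr_ge0.
have := archi_boundP (divr_ge0 G0 (ltW e0)); rewrite ltr_pdivrMr // => Gb.
have bN : (Num.bound (G / e))%:R <= norm1 (fun i j => z n i j - x0 i j).
  by apply/ltW/(le_lt_trans _ (z_gt n)); rewrite ler_nat.
nra.
Qed.

Lemma IR_bounded (C : R) : exists M : R, forall z : I -> J -> R,
  individually_rational u x0 z ->
  (exists2 c : R, 0 <= c <= C & forall j, \sum_i z i j = \sum_i x0 i j - c * g j) ->
  forall i j, `|z i j| <= M.
Proof.
have [M zM] := IR_deviation_bounded C.
exists (norm1 x0 + M) => z zIR zc i j.
rewrite -(subrK (x0 i j) (z i j)); apply: le_trans (ler_normD _ _) _.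
rewrite addrC lerD ?normr_le_norm1 //.
exact: le_trans (normr_le_norm1 (fun i j => z i j - x0 i j) i j) (zM z zIR zc).
Qed.

End BoundedIR.

(** * The repeated double auction *)

Section RepeatedDoubleAuction.
Context {R : realType} {I J : finType} (g : J -> R) (u : I -> (J -> R) -> \bar R)
  (x0 : I -> J -> R) (x xbar : nat -> I -> J -> R) (p : nat -> J -> R).
Hypotheses (u_noinf : forall i y, u i y != +oo%E) (u_usc : forall i, usc (u i))
  (u_conc : forall i, concave (u i))
  (u_g : forall i (y : J -> R) (r : R), dom (u i) y -> 0 < r ->
           (u i y < u i (fun j => (y j + r * g j)%R))%E)
  (hypA : forall y : I -> J -> R,
      (forall i (xb : J -> R), dom (u i) xb -> (0 <= recession (u i) xb (y i))%E) ->
      (forall j, \sum_(i : I) y i j = 0) -> y = (fun _ _ => 0))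
  (hypB : forall r : R, 0 < r -> forall i, exists2 d : R, 0 < d &
      forall y : J -> R, inball r y ->
        (u i y + (d * r)%:E <= u i (fun j => (y j + r * g j)%R))%E)
  (x0_dom : forall i, dom (u i) (x0 i))
  (x_0 : x 0%N = x0)
  (xbar_feas : forall t, (1 <= t)%N -> forall j, \sum_(i : I) xbar t i j = 0)
  (xbar_opt : forall t, (1 <= t)%N -> forall y : I -> J -> R,
      (forall j, \sum_(i : I) y i j = 0) ->
      (\sum_(i : I) Dfun (u i) g (x t.-1 i) (y i)
         <= \sum_(i : I) Dfun (u i) g (x t.-1 i) (xbar t i))%E)
  (p_sup : forall t, (1 <= t)%N -> forall i,
      superdiff (Dfun (u i) g (x t.-1 i)) (xbar t i) (p t))
  (x_step : forall t, (1 <= t)%N -> forall i j,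
      x t i j = x t.-1 i j + xbar t i j - dotp (p t) (xbar t i) * g j).

(* Index t refers to the auction that turns x^t into x^{t+1}; xmid is the bundle
   obtained by paying exactly the reservation amount D_i(xbar_i) in units of g. *)
Definition surplus t i := fine (Dfun (u i) g (x t i) (xbar t.+1 i)).
Definition payment t i := dotp (p t.+1) (xbar t.+1 i).
Definition gain t i := surplus t i - payment t i.
Definition xmid t i j := x t i j + xbar t.+1 i j - surplus t i * g j.
Definition cs t := \sum_i surplus t i.

Lemma x_succ t i : x t.+1 i = (fun j => xmid t i j + gain t i * g j).
Proof. by apply/funext => j; rewrite x_step //= /xmid /gain /payment; ring. Qed.

(* The superdifferential inequality at y = 0, where D(0) = 0, bounds the
   payment by the surplus. *)
Lemma step_spec t : (forall i, dom (u i) (x t i)) -> forall i,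
  [/\ Dfun (u i) g (x t i) (xbar t.+1 i) = (surplus t i)%:E,
      (u i (x t i) <= u i (xmid t i))%E,
      (u i (xmid t i) <= u i (x t.+1 i))%E & payment t i <= surplus t i].
Proof.
move=> xd i.
have pay_le : ((payment t i)%:E <= Dfun (u i) g (x t i) (xbar t.+1 i))%E.
  have := p_sup _ (ltn0Sn t) i (fun=> 0); rewrite /= (Dfun0 (u_g i) (xd i)).
  have -> : dotp (p t.+1) (fun j => 0 - xbar t.+1 i j) = - payment t i.
    by rewrite /dotp /payment -sumrN; apply: eq_bigr => j _; ring.
  case: (Dfun _ _ _ _) => [s||] //=; first by rewrite -EFinD !lee_fin; lra.
  by move=> _; exact: leey.
have [s Ds Dls] := Dfun_fin (u_noinf i) (u_usc i) (u_conc i) (u_g i) (xd i)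
  (lt_le_trans (ltNyr _) pay_le).
have surplus_s : surplus t i = s by rewrite /surplus Ds.
have mid_dom : dom (u i) (xmid t i) by apply: dom_le (xd i) _; rewrite /xmid surplus_s.
split => //; first by rewrite surplus_s.
- by rewrite /xmid surplus_s.
- rewrite x_succ; apply: (u_nondecr_g (u_g i) mid_dom).
  by rewrite /gain subr_ge0 surplus_s -lee_fin -Ds.
- by rewrite surplus_s -lee_fin -Ds.
Qed.

Lemma dom_x t i : dom (u i) (x t i).
Proof.
elim: t i => [|t IH] i; first by rewrite x_0.
have [_ x_mid mid_x _] := step_spec t IH i.
exact: dom_le (IH i) (le_trans x_mid mid_x).
Qed.

Lemma u_x_nondecr i : nondecreasing_seq (fun t => u i (x t i)).
Proof.
apply/nondecreasing_seqP => t.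
by have [_ x_mid mid_x _] := step_spec t (dom_x t) i; exact: le_trans x_mid mid_x.
Qed.

Lemma u_x_mid t i : (u i (x t i) <= u i (xmid t i))%E.
Proof. by case: (step_spec t (dom_x t) i). Qed.

Lemma gain_ge0 t i : 0 <= gain t i.
Proof. by rewrite subr_ge0; case: (step_spec t (dom_x t) i). Qed.

Lemma sum_payment t : \sum_i payment t i = 0.
Proof.
rewrite /payment /dotp exchange_big /=; apply: big1 => j _.
by rewrite -mulr_sumr xbar_feas // mulr0.
Qed.

Lemma sum_gain t : \sum_i gain t i = cs t.
Proof. by rewrite sumrB sum_payment subr0. Qed.

Lemma feasible_x t : feasible x0 (x t).
Proof.
elim: t => [|t IH] j; first by rewrite x_0.
under eq_bigr do rewrite x_step //=.
by rewrite sumrB big_split /= xbar_feas // -mulr_suml sum_payment mul0r addr0 subr0 IH.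
Qed.

Lemma sum_xmid t j : \sum_i xmid t i j = \sum_i x0 i j - cs t * g j.
Proof.
by rewrite /xmid sumrB big_split /= xbar_feas // addr0 feasible_x -mulr_suml.
Qed.

Lemma CS_x t : CS u g (x t) = (cs t)%:E.
Proof.
have Dsum : (\sum_i Dfun (u i) g (x t i) (xbar t.+1 i))%E = (cs t)%:E.
  by rewrite /cs -sumEFin; apply: eq_bigr => i _; case: (step_spec t (dom_x t) i).
apply/eqP; rewrite eq_le; apply/andP; split.
  apply: ge_ereal_sup => _ [y y0 <-]; rewrite -Dsum.
  exact: (xbar_opt _ (ltn0Sn t) _ y0).
by rewrite -Dsum; apply: ereal_sup_ubound; exists (xbar t.+1) => //; exact: xbar_feas.
Qed.

Lemma cs_ge0 t : 0 <= cs t.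
Proof. by rewrite -lee_fin -CS_x; apply: CS_ge0 u_g (dom_x t). Qed.

Lemma CS_x_nonincr t : (CS u g (x t.+1) <= CS u g (x t))%E.
Proof. by apply: CS_le => [j|i]; rewrite ?feasible_x // u_x_nondecr. Qed.

Lemma cs_nonincr : nonincreasing_seq cs.
Proof. by apply/nonincreasing_seqP => t; rewrite -lee_fin -!CS_x CS_x_nonincr. Qed.

Lemma gain_le_cs0 t i : gain t i <= cs 0%N.
Proof.
apply: le_trans (cs_nonincr _ _ (leq0n t)); rewrite -sum_gain (bigD1 i) //= lerDl.
by apply: sumr_ge0 => k _; exact: gain_ge0.
Qed.

Lemma x_xmid_bounded : exists M : R,
  forall t i j, `|x t i j| <= M /\ `|xmid t i j| <= M.
Proof.
have [M zM] := IR_bounded g u_noinf u_usc u_conc hypA x0_dom (cs 0%N).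
have IRx t i : (u i (x0 i) <= u i (x t i))%E by rewrite -x_0 u_x_nondecr.
exists M => t i j; split; apply: zM.
- exact: IRx.
- by exists 0 => [|k]; rewrite ?lexx ?cs_ge0 // feasible_x mul0r subr0.
- by move=> k; exact: le_trans (IRx t k) (u_x_mid t k).
- by exists (cs t); [rewrite cs_ge0 cs_nonincr | exact: sum_xmid].
Qed.

Lemma radius_exists : exists2 r : R, 0 < r &
  forall t i, inball r (xmid t i) /\ gain t i <= r.
Proof.
have [M xM] := x_xmid_bounded.
have n0 : 0 <= #|J|%:R :> R by [].
have M0 := normr_ge0 M; have cs00 := cs_ge0 0%N.
pose A := (#|J|%:R + 1) * (`|M| + 1).
have A1 : 1 <= A by rewrite -[1]mulr1 ler_pM // ?lerDr.
exists (A + cs 0%N) => [|t i]; first by lra.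
split; last by apply: le_trans (gain_le_cs0 t i) _; lra.
rewrite /inball; apply: le_trans (sqnorm_le_card (fun j => (xM t i j).2)) _.
have : #|J|%:R * M ^+ 2 <= A ^+ 2.
  rewrite /A exprMn -real_normK ?num_real // ler_pM ?sqr_ge0 //; nra.
move=> MA; apply: le_trans MA _; nra.
Qed.

Definition growth_bound (r : R) (d : I -> R) := forall i, 0 < d i /\
  forall y : J -> R, inball r y ->
    (u i y + (d i * r)%:E <= u i (fun j => (y j + r * g j)%R))%E.

Section Rate.
Context {r : R} {d : I -> R}.
Hypotheses (r0 : 0 < r) (r_ok : forall t i, inball r (xmid t i) /\ gain t i <= r)
  (dB : growth_bound r d).

(* x^{t+1} = xmid + gain g, and by concavity the growth of (B) at step r gives
   growth d_i * gain_i at the shorter step gain_i. *)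
Lemma u_growth t i : fine (u i (x t i)) + d i * gain t i <= fine (u i (x t.+1 i)).
Proof.
have mid_dom := dom_le (dom_x t i) (u_x_mid t i).
have [mid_ball gain_r] := r_ok t i.
have := concave_gain_g (u_noinf i) (u_conc i) (u_g i) mid_dom r0
  (introT andP (conj (gain_ge0 t i) gain_r)) ((dB i).2 _ mid_ball).
rewrite -x_succ (u_fin (u_noinf i) mid_dom) (u_fin (u_noinf i) (dom_x t.+1 i)).
rewrite -EFinD lee_fin; apply: le_trans; rewrite lerD2r -lee_fin.
by rewrite -(u_fin (u_noinf i) mid_dom) -(u_fin (u_noinf i) (dom_x t i)) u_x_mid.
Qed.

Lemma telescoping_bound T :
  T%:R * cs T <= \sum_i (fine (u i (x T i)) - fine (u i (x0 i))) / d i.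
Proof.
apply: (@le_trans _ _ (\sum_(s < T) cs s)).
  rewrite -[T in T%:R]card_ord mulr_natl -sumr_const.
  by apply: ler_sum => s _; apply: cs_nonincr; exact: ltnW.
elim: T => [|T IH]; first by rewrite big_ord0 big1 // => i _; rewrite x_0 subrr mul0r.
rewrite big_ord_recr /=.
have -> : \sum_i (fine (u i (x T.+1 i)) - fine (u i (x0 i))) / d i =
  \sum_i (fine (u i (x T i)) - fine (u i (x0 i))) / d i +
  \sum_i (fine (u i (x T.+1 i)) - fine (u i (x T i))) / d i.
  by rewrite -big_split; apply: eq_bigr => i _ /=; rewrite -mulrDl; congr (_ * _); ring.
apply: lerD IH _; rewrite -sum_gain; apply: ler_sum => i _.
have [d0 _] := dB i; rewrite ler_pdivlMr // mulrC.
have := u_growth T i; lra.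
Qed.

End Rate.

Lemma CS_rate : exists2 r : R, 0 < r &
  forall d : I -> R, growth_bound r d -> forall t, (1 <= t)%N ->
    (CS u g (x t) <= (t%:R^-1)%:E *
       \sum_(i : I) ((u i (x t i) - u i (x0 i)) * ((d i)^-1)%:E))%E.
Proof.
have [r r0 r_ok] := radius_exists.
exists r => // d dB t t1.
have -> : (\sum_(i : I) ((u i (x t i) - u i (x0 i)) * ((d i)^-1)%:E))%E =
    (\sum_i (fine (u i (x t i)) - fine (u i (x0 i))) / d i)%:E.
  rewrite -sumEFin; apply: eq_bigr => i _.
  by rewrite (u_fin (u_noinf i) (dom_x t i)) (u_fin (u_noinf i) (x0_dom i)) -EFinB -EFinM.
rewrite CS_x -EFinM lee_fin ler_pdivlMl ?ltr0n //.
exact: telescoping_bound r0 r_ok dB t.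
Qed.

Lemma x_bounded : exists M : R, forall t i j, `|x t i j| <= M.
Proof. by have [M xM] := x_xmid_bounded; exists M => t i j; case: (xM t i j). Qed.

Lemma u_x_le_cluster {xb} : cluster_point x xb ->
  forall t i, (u i (x t i) <= u i (xb i))%E.
Proof.
move=> xbcl t i.
apply: (usc_le_cluster (u_noinf i) (u_usc i) (u_x_nondecr i)) => e e0 N.
by have [n Nn close] := xbcl e e0 N; exists n => // j; exact: close.
Qed.

Lemma dom_cluster {xb} : cluster_point x xb -> forall i, dom (u i) (xb i).
Proof. by move=> xbcl i; exact: dom_le (dom_x 0%N i) (u_x_le_cluster xbcl 0%N i). Qed.

(* Utilities are bounded above along the sequence by their values at a cluster
   point, so the telescoping bound gives cs t = O(1/t). *)
Lemma cs_small {e : R} : 0 < e -> exists N, forall t, (N <= t)%N -> cs t < e.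
Proof.
move=> e0; have [r r0 r_ok] := radius_exists.
have /choice [d dB] : forall i, exists d : R, 0 < d /\ forall y : J -> R, inball r y ->
    (u i y + (d * r)%:E <= u i (fun j => (y j + r * g j)%R))%E.
  by move=> i; have [d d0 dB] := hypB r r0 i; exists d.
have [M xM] := x_bounded; have [xc xccl] := bounded_cluster_point xM.
pose B := \sum_i (fine (u i (xc i)) - fine (u i (x0 i))) / d i.
have csB t : t%:R * cs t <= B.
  apply: le_trans (telescoping_bound r0 r_ok dB t) _; apply: ler_sum => i _.
  have [d0 _] := dB i; apply: ler_wpM2r; first by rewrite invr_ge0 ltW.
  rewrite lerD2r -lee_fin.
  rewrite -(u_fin (u_noinf i) (dom_x t i)) -(u_fin (u_noinf i) (dom_cluster xccl i)).
  exact: u_x_le_cluster.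
have B0 : 0 <= B by have := csB 0%N; rewrite mul0r.
exists (Num.bound (B / e)) => t bt.
have := archi_boundP (divr_ge0 B0 (ltW e0)); rewrite ltr_pdivrMr // => Bb.
have bte : (Num.bound (B / e))%:R * e <= t%:R * e by rewrite ler_pM2r // ler_nat.
have t0 : 0 < t%:R :> R by rewrite -(pmulr_lgt0 _ e0); lra.
by rewrite -(ltr_pM2l t0); have := csB t; lra.
Qed.

Lemma CS_cvg0 : (fun t => CS u g (x t)) @ \oo --> 0%E.
Proof.
have -> : (fun t => CS u g (x t)) = (fun t => (cs t)%:E) by apply/funext => t; exact: CS_x.
apply: cvg_EFin; first exact: nearW.
apply/cvgrPdist_lt => e e0; have [N csN] := cs_small e0.
by exists N => // t Nt; rewrite /= sub0r normrN ger0_norm ?cs_ge0 ?csN.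
Qed.

Lemma cluster_feasible {xb} : cluster_point x xb -> feasible x0 xb.
Proof.
move=> xbcl; apply: (cluster_point_sum xbcl) => e e0.
by exists 0%N => n _ j; rewrite feasible_x subrr normr0 ltW.
Qed.

(* CS is antitone in utility levels, so CS(xb) <= CS(x^t) -> 0. *)
Lemma cluster_equilibrium_IR xb : cluster_point x xb ->
  DA_equilibrium u g xb /\ individually_rational u x0 xb.
Proof.
move=> xbcl; have xb_up := u_x_le_cluster xbcl.
split; last by move=> i; rewrite -x_0; exact: xb_up.
apply/eqP; rewrite eq_le (CS_ge0 u_g (dom_cluster xbcl)) andbT.
apply/lee_addgt0Pr => e e0; rewrite add0e.
have [N csN] := cs_small e0.
apply: le_trans (CS_le xb (x N) _ (xb_up N)) _.
  by move=> j; rewrite (cluster_feasible xbcl) feasible_x.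
by rewrite CS_x lee_fin ltW // csN.
Qed.

Lemma cluster_pareto :
  (forall i (y : J -> R),
      (exists2 y' : J -> R, dom (u i) y' & (u i y' < u i y)%E) ->
      exists2 e0 : R, 0 < e0 &
        forall e : R, 0 < e -> e < e0 -> dom (u i) (fun j => y j - e * g j)) ->
  forall xb, cluster_point x xb -> pareto_efficient u x0 xb.
Proof.
move=> g_dom xb xbcl; have xb_feas := cluster_feasible xbcl.
have xbd := dom_cluster xbcl; have [CS0 _] := cluster_equilibrium_IR xb xbcl.
split => // -[x' [x'_feas [x'_ge [k x'k]]]].
pose y i j := x' i j - xb i j.
have y0 j : \sum_i y i j = 0 by rewrite sumrB x'_feas xb_feas subrr.
have [rho rho0 rhok] := lt_u_sub_g (u_noinf k) (u_conc k) (xbd k) x'k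
  (g_dom k _ (ex_intro2 _ _ _ (xbd k) x'k)).
have D_ge i (r : R) : (u i (xb i) <= u i (fun j => (x' i j - r * g j)%R))%E ->
    (r%:E <= Dfun (u i) g (xb i) (y i))%E.
  move=> xr; apply: Dfun_ge; rewrite /Dlevel /=.
  by have -> : (fun j => xb i j + y i j - r * g j) = (fun j => x' i j - r * g j)
    by apply/funext => j; rewrite /y; ring.
have rho_le : (rho%:E <= \sum_i Dfun (u i) g (xb i) (y i))%E.
  rewrite (bigD1 k) //=; apply: le_trans (D_ge k rho rhok) _.
  apply: leeDl; apply: sume_ge0 => i _; apply: D_ge.
  by under eq_fun do rewrite mul0r subr0.
have : (\sum_i Dfun (u i) g (xb i) (y i) <= CS u g xb)%E.
  by apply: ereal_sup_ubound; exists y.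
by rewrite CS0 => /(le_trans rho_le); rewrite lee_fin leNgt rho0.
Qed.

End RepeatedDoubleAuction.

Theorem theorem6p3 (R : realType) (I J : finType) (g : J -> R)
  (u : I -> (J -> R) -> \bar R)
  (x0 : I -> J -> R)
  (x : nat -> I -> J -> R) (xbar : nat -> I -> J -> R) (p : nat -> J -> R)
  (* u_i : R^J -> R \cup {-oo}, upper semicontinuous, concave *)
  (u_noinf : forall i y, u i y != +oo%E)
  (u_usc : forall i, usc (u i))
  (u_conc : forall i, concave (u i))
  (* strict monotonicity along g *)
  (u_g : forall i (y : J -> R) (r : R), dom (u i) y -> 0 < r ->
           (u i y < u i (fun j => (y j + r * g j)%R))%E)
  (* assumption (A) *)
  (hypA : forall y : I -> J -> R,
      (forall i (xb : J -> R), dom (u i) xb -> (0 <= recession (u i) xb (y i))%E) ->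
      (forall j, \sum_(i : I) y i j = 0) -> y = (fun _ _ => 0))
  (* assumption (B) *)
  (hypB : forall r : R, 0 < r -> forall i, exists2 d : R, 0 < d &
      forall y : J -> R, inball r y ->
        (u i y + (d * r)%:E <= u i (fun j => (y j + r * g j)%R))%E)
  (* initial allocation (in the domain of the utilities) *)
  (x0_dom : forall i, dom (u i) (x0 i))
  (x_0 : x 0%N = x0)
  (* repeated double auctions *)
  (xbar_feas : forall t, (1 <= t)%N -> forall j, \sum_(i : I) xbar t i j = 0)
  (xbar_opt : forall t, (1 <= t)%N -> forall y : I -> J -> R,
      (forall j, \sum_(i : I) y i j = 0) ->
      (\sum_(i : I) Dfun (u i) g (x t.-1 i) (y i)
         <= \sum_(i : I) Dfun (u i) g (x t.-1 i) (xbar t i))%E)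
  (p_sup : forall t, (1 <= t)%N -> forall i,
      superdiff (Dfun (u i) g (x t.-1 i)) (xbar t i) (p t))
  (x_step : forall t, (1 <= t)%N -> forall i j,
      x t i j = x t.-1 i j + xbar t i j - dotp (p t) (xbar t i) * g j) :
  (* the sequence is bounded *)
  (exists M : R, forall t i j, `|x t i j| <= M) /\
  (* CS(x^t) is nonincreasing and converges to 0 *)
  (forall t, (CS u g (x t.+1) <= CS u g (x t))%E) /\
  ((fun t => CS u g (x t)) @ \oo --> 0%E) /\
  (* rate *)
  (exists2 r : R, 0 < r &
     forall d : I -> R,
       (forall i, 0 < d i /\ forall y : J -> R, inball r y ->
          (u i y + (d i * r)%:E <= u i (fun j => (y j + r * g j)%R))%E) ->
       forall t, (1 <= t)%N ->
         (CS u g (x t) <= (t%:R^-1)%:E *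
            \sum_(i : I) ((u i (x t i) - u i (x0 i)) * ((d i)^-1)%:E))%E) /\
  (* cluster points are equilibria and individually rational *)
  (forall xb, cluster_point x xb ->
     DA_equilibrium u g xb /\ individually_rational u x0 xb) /\
  (* Pareto efficiency under the extra domain condition *)
  ((forall i (y : J -> R),
      (exists2 y' : J -> R, dom (u i) y' & (u i y' < u i y)%E) ->
      exists2 e0 : R, 0 < e0 &
        forall e : R, 0 < e -> e < e0 -> dom (u i) (fun j => y j - e * g j)) ->
   forall xb, cluster_point x xb -> pareto_efficient u x0 xb).

Proof.
split; first by apply: (x_bounded g u x0 x xbar p).
split; first by apply: (CS_x_nonincr g u x0 x xbar p).
split; first by apply: (CS_cvg0 g u x0 x xbar p).
split; first by apply: (CS_rate g u x0 x xbar p).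
split; first by apply: (cluster_equilibrium_IR g u x0 x xbar p).
by apply: (cluster_pareto g u x0 x xbar p).
Qed.
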